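(* Let $\tau$ be the random ordering in which $\tau(1),\tau(2),\dots$ are i.i.d. uniform on $\{1,\dots,T\}$. For every $S=\{(X_m,y_m)\}_{m=1}^T\in\mathcal{S}_T$ with $r_{\mathrm{avg}}=\frac1T\sum_{m=1}^T\operatorname{rank}(X_m)$ and every $k\ge2$, $$\mathbb{E}_\tau\big[F_{\tau,S}(k)\big]\le\frac{9(d-r_{\mathrm{avg}})}{k}.$$
   Context: Let $d\ge 1$, $T\ge1$. A task is a pair $(X_m,y_m)$ with $X_m\in\mathbb{R}^{n_m\times d}$, $y_m\in\mathbb{R}^{n_m}$ and $\operatorname{rank}(X_m)<d$. $\mathcal{S}_T$ denotes the set of collections $S=\{(X_m,y_m)\}_{m=1}^T$ of $T$ tasks such that $\|X_m\|\le 1$ (spectral norm) for all $m$ and there exists $w\in\mathbb{R}^d$ with $\|w\|\le 1$ and $y_m=X_mw$ for all $m$. Given $S$ and an ordering $\tau:\mathbb{N}^+\to\{1,\dots,T\}$, the iterates are $w_0=0$ and $w_t=w_{t-1}+X_{\tau(t)}^+(y_{\tau(t)}-X_{\tau(t)}w_{t-1})$, with $A^+$ the Moore–Penrose pseudoinverse. The forgetting at iteration $k$ is $F_{\tau,S}(k)=\frac1k\sum_{t=1}^k\|X_{\tau(t)}w_k-y_{\tau(t)}\|^2$. *)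

From HB Require Import structures.
From mathcomp Require Import all_boot all_order all_algebra.
From mathcomp Require Import reals.
From Stdlib Require Import ClassicalEpsilon.
Set Implicit Arguments. Unset Strict Implicit. Unset Printing Implicit Defensive.
Import Order.TTheory GRing.Theory Num.Theory.
Local Open Scope ring_scope.

Section Defs.
Variable R : realType.

(* Moore-Penrose pseudoinverse: B is the pseudoinverse of A iff the four
   Penrose conditions hold (real matrices, so adjoint = transpose). *)
Definition is_pinv (p q : nat) (A : 'M[R]_(p, q)) (B : 'M[R]_(q, p)) : Prop :=
  [/\ A *m B *m A = A, B *m A *m B = B,
      (A *m B)^T = A *m B & (B *m A)^T = B *m A].

Definition pinv (p q : nat) (A : 'M[R]_(p, q)) : 'M[R]_(q, p) :=
  epsilon (inhabits 0) (is_pinv A).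

Definition sqnorm (p : nat) (v : 'cV[R]_p) : R := \sum_(i < p) v i 0 ^+ 2.

Definition spec_norm_le1 (p q : nat) (X : 'M[R]_(p, q)) : Prop :=
  forall v : 'cV[R]_q, sqnorm (X *m v) <= sqnorm v.

Definition in_S_T (T d : nat) (n : 'I_T -> nat)
    (X : forall m : 'I_T, 'M[R]_(n m, d)) (y : forall m : 'I_T, 'cV[R]_(n m)) : Prop :=
  (forall m, \rank (X m) < d)%N /\
  (forall m, spec_norm_le1 (X m)) /\
  exists w : 'cV[R]_d, sqnorm w <= 1 /\ forall m, y m = X m *m w.

Definition step (T d : nat) (n : 'I_T -> nat)
    (X : forall m : 'I_T, 'M[R]_(n m, d)) (y : forall m : 'I_T, 'cV[R]_(n m))
    (w : 'cV[R]_d) (m : 'I_T) : 'cV[R]_d :=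
  w + pinv (X m) *m (y m - X m *m w).

Definition iterate (T d : nat) (n : 'I_T -> nat)
    (X : forall m : 'I_T, 'M[R]_(n m, d)) (y : forall m : 'I_T, 'cV[R]_(n m))
    (s : seq 'I_T) : 'cV[R]_d :=
  foldl (step X y) 0 s.

(* forgetting F_{tau,S}(k), where tau(t) = tau' (t-1) for t = 1..k *)
Definition forgetting (T d : nat) (n : 'I_T -> nat)
    (X : forall m : 'I_T, 'M[R]_(n m, d)) (y : forall m : 'I_T, 'cV[R]_(n m))
    (k : nat) (tau' : 'I_k -> 'I_T) : R :=
  let wk := iterate X y [seq tau' t | t <- enum 'I_k] in
  k%:R^-1 * \sum_(t < k) sqnorm (X (tau' t) *m wk - y (tau' t)).

(* E_tau[F_{tau,S}(k)] for tau(1), tau(2), ... i.i.d. uniform on the T tasks: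
   F(k) only depends on tau(1..k), which is uniform on the T^k sequences. *)
Definition expected_forgetting (T d : nat) (n : 'I_T -> nat)
    (X : forall m : 'I_T, 'M[R]_(n m, d)) (y : forall m : 'I_T, 'cV[R]_(n m))
    (k : nat) : R :=
  (T ^ k)%:R^-1 * \sum_(tau' : {ffun 'I_k -> 'I_T}) forgetting X y tau'.

Definition r_avg (T d : nat) (n : 'I_T -> nat)
    (X : forall m : 'I_T, 'M[R]_(n m, d)) : R :=
  T%:R^-1 * \sum_(m < T) (\rank (X m))%:R.

End Defs.

From HB Require Import structures.
From mathcomp Require Import all_boot all_order all_algebra.
From mathcomp Require Import reals.
From mathcomp.algebra_tactics Require Import ring lra.
From Stdlib Require Import ClassicalEpsilon.
Set Implicit Arguments. Unset Strict Implicit. Unset Printing Implicit Defensive.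
Import Order.TTheory GRing.Theory Num.Theory.
Local Open Scope ring_scope.

(* Let w be a common solution, P_m = I - X_m^+ X_m the orthogonal projection onto
   ker X_m and Q_m = I - P_m.  After the tasks s, the error w_s - w is -Pi_s w with
   Pi_s the product of the P_m along s, so the loss on task m is at most
   |Q_m Pi_s|_F^2.  Let L_j be the expected mean over m of |Q_m Pi_s|_F^2 and E_j the
   expected |Pi_s|_F^2, for s uniform of length j.  By Pythagoras L_j = E_j - E_(j+1),
   and L_j is nonincreasing, so the sum of the L_j, j >= 1, is at most
   E_1 = d - r_avg.  Writing s = a ++ m :: b, Q_m Pi_s = Q_m Pi_b Pi_a - Q_m Pi_b Q_m Pi_a,
   and as m is independent of a and b, the expected loss on the task at position
   p >= 1 is at most 2 L_(k-1) + 2 L_p <= 4 L_p; at position 0 it is at most E_1.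
   Summing over the k positions, k E[F(k)] <= 5 (d - r_avg). *)

Section Frobenius.
Variable R : realFieldType.

Definition sqfrob p q (M : 'M[R]_(p, q)) : R := \sum_i \sum_j M i j ^+ 2.

Definition orthoproj n (P : 'M[R]_n) := P^T = P /\ P *m P = P.

Lemma sqfrob_ge0 p q (M : 'M[R]_(p, q)) : 0 <= sqfrob M.
Proof. by apply: sumr_ge0 => i _; apply: sumr_ge0 => j _; apply: sqr_ge0. Qed.

Lemma sqfrob_trace p q (M : 'M[R]_(p, q)) : sqfrob M = \tr (M^T *m M).
Proof.
rewrite /sqfrob /mxtrace exchange_big; apply: eq_bigr => j _.
by rewrite mxE; apply: eq_bigr => i _; rewrite !mxE expr2.
Qed.

Lemma sqfrob_tr p q (M : 'M[R]_(p, q)) : sqfrob M^T = sqfrob M.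
Proof. by rewrite /sqfrob exchange_big; do 2!apply: eq_bigr => ? _; rewrite mxE. Qed.

Lemma sqfrob_eq0 p q (M : 'M[R]_(p, q)) : sqfrob M = 0 -> M = 0.
Proof.
move=> M0; apply/matrixP => i j; rewrite mxE; apply/eqP; rewrite -sqrf_eq0; apply/eqP.
have sq0 k l : 0 <= M k l ^+ 2 by apply: sqr_ge0.
have row0 := @psumr_eq0P _ _ _ _ (fun k _ => sumr_ge0 _ (fun l _ => sq0 k l)) M0 i isT.
exact: @psumr_eq0P _ _ _ _ (fun l _ => sq0 i l) row0 j isT.
Qed.

Lemma gram_eq0 p q (M : 'M[R]_(p, q)) : M^T *m M = 0 -> M = 0.
Proof. by move=> MM0; apply: sqfrob_eq0; rewrite sqfrob_trace MM0 linear0. Qed.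

Lemma orthoproj_compl n (P : 'M[R]_n) : orthoproj P -> orthoproj (1%:M - P).
Proof.
case=> PT PP; split; first by rewrite linearB /= trmx1 PT.
by rewrite mulmxBl mul1mx mulmxBr mulmx1 PP subrr subr0.
Qed.

Lemma sqfrob_orthoproj_split n q (P : 'M[R]_n) (M : 'M[R]_(n, q)) : orthoproj P ->
  sqfrob M = sqfrob (P *m M) + sqfrob ((1%:M - P) *m M).
Proof.
have sqfrobE P' : orthoproj P' -> sqfrob (P' *m M) = \tr (M^T *m P' *m M).
  by case=> PT PP; rewrite sqfrob_trace trmx_mul PT mulmxA -(mulmxA M^T P' P') PP.
move=> pP; rewrite (sqfrobE _ pP) (sqfrobE _ (orthoproj_compl pP)) -mxtraceD.
by rewrite -mulmxDl -mulmxDr addrC subrK mulmx1 sqfrob_trace.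
Qed.

Lemma sqfrob_orthoproj_mull n q (P : 'M[R]_n) (M : 'M[R]_(n, q)) : orthoproj P ->
  sqfrob (P *m M) <= sqfrob M.
Proof. by move=> pP; rewrite (sqfrob_orthoproj_split M pP) lerDl sqfrob_ge0. Qed.

Lemma sqfrob_orthoproj_mulr n q (P : 'M[R]_n) (M : 'M[R]_(q, n)) : orthoproj P ->
  sqfrob (M *m P) <= sqfrob M.
Proof.
move=> pP; rewrite -sqfrob_tr trmx_mul (proj1 pP) -(sqfrob_tr M).
exact: sqfrob_orthoproj_mull.
Qed.

Lemma sqfrobB_le p q (A B : 'M[R]_(p, q)) :
  sqfrob (A - B) <= 2 * sqfrob A + 2 * sqfrob B.
Proof.
rewrite /sqfrob !mulr_sumr -big_split /=; apply: ler_sum => i _.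
rewrite !mulr_sumr -big_split /=; apply: ler_sum => j _.
rewrite !mxE; have := sqr_ge0 (A i j + B i j); rewrite !expr2; lra.
Qed.

Lemma cauchy_schwarz q (a b : 'I_q -> R) :
  (\sum_i a i * b i) ^+ 2 <= (\sum_i a i ^+ 2) * (\sum_i b i ^+ 2).
Proof.
set A := \sum_i a i ^+ 2; set B := \sum_i b i ^+ 2; set C := \sum_i a i * b i.
have A_ge0 : 0 <= A by apply: sumr_ge0 => i _; apply: sqr_ge0.
have [A0|A_neq0] := eqVneq A 0.
  have a0 i : a i = 0.
    apply/eqP; rewrite -sqrf_eq0; apply/eqP.
    exact: @psumr_eq0P _ _ _ _ (fun j _ => sqr_ge0 (a j)) A0 i isT.
  have -> : C = 0 by rewrite /C big1 // => i _; rewrite a0 mul0r.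
  by rewrite A0 expr0n mul0r.
have A_gt0 : 0 < A by rewrite lt_def A_neq0 A_ge0.
(* [A (A B - C^2) = sum_i (C a_i - A b_i)^2] *)
have : 0 <= A * (A * B - C ^+ 2).
  have : 0 <= \sum_i (C * a i - A * b i) ^+ 2 by apply: sumr_ge0 => i _; apply: sqr_ge0.
  rewrite (eq_bigr (fun i => C ^+ 2 * a i ^+ 2 - 2 * C * A * (a i * b i) + A ^+ 2 * b i ^+ 2));
    last by move=> i _; ring.
  rewrite big_split sumrB /= -!mulr_sumr -/A -/B -/C.
  by have -> : A * (A * B - C ^+ 2) = C ^+ 2 * A - 2 * C * A * C + A ^+ 2 * B by ring.
by rewrite pmulr_rge0 // subr_ge0.
Qed.

End Frobenius.

Section Rank.
Variable R : fieldType.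

Lemma mxtrace_ginv p q (A : 'M[R]_(p, q)) (G : 'M[R]_(q, p)) :
  A *m G *m A = A -> \tr (G *m A) = (\rank A)%:R.
Proof.
move=> AGA; have [L LC] := row_fullP (col_base_full A).
have [K FK] := row_freeP (row_base_free A).
set C := col_base A in LC *; set F := row_base A in FK *.
have CF : C *m F = A := mulmx_base A.
clearbody C F.
(* cancel the full-rank factors of [A = C F] on both sides of [A G A = A] *)
have FGC : F *m G *m C = 1%:M.
  have : L *m (C *m F *m G *m (C *m F)) *m K = L *m (C *m F) *m K by rewrite CF AGA.
  by rewrite !mulmxA LC mul1mx -!mulmxA FK mulmx1 !mulmxA.
by rewrite -[in LHS]CF mulmxA mxtrace_mulC mulmxA FGC mxtrace1.
Qed.

End Rank.

Section RealMatrices.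
Variable R : realType.

Lemma sqnormN p (v : 'cV[R]_p) : sqnorm (- v) = sqnorm v.
Proof. by apply: eq_bigr => i _; rewrite mxE sqrrN. Qed.

Lemma sqnorm_mulmx_le p q (M : 'M[R]_(p, q)) (w : 'cV[R]_q) :
  sqnorm (M *m w) <= sqfrob M * sqnorm w.
Proof.
rewrite /sqnorm /sqfrob mulr_suml; apply: ler_sum => i _.
by rewrite mxE; apply: (cauchy_schwarz (M i) (w^~ 0)).
Qed.

Lemma row_full_gram_unit p r (C : 'M[R]_(p, r)) : row_full C -> C^T *m C \in unitmx.
Proof.
move=> fullC; rewrite -row_free_unit -kermx_eq0; apply/eqP/row_matrixP => i.
set v := row i _; have vG0 : v *m (C^T *m C) = 0 by rewrite -row_mul mulmx_ker row0.
have : (C *m v^T)^T *m (C *m v^T) = 0.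
  by rewrite trmx_mul trmxK mulmxA -(mulmxA v) vG0 mul0mx.
move/gram_eq0; rewrite -(mulmx0 _ C) => /(row_full_inj fullC)/(congr1 trmx).
by rewrite trmxK row0 trmx0.
Qed.

(* the pseudoinverse of a rank factorisation [C F] is [F^+ C^+] *)
Lemma is_pinv_rank_factor p q r (C : 'M[R]_(p, r)) (F : 'M[R]_(r, q)) :
  C^T *m C \in unitmx -> F *m F^T \in unitmx ->
  is_pinv (C *m F) (F^T *m invmx (F *m F^T) *m invmx (C^T *m C) *m C^T).
Proof.
set G := C^T *m C; set H := F *m F^T => Gunit Hunit.
have GT : G^T = G by rewrite trmx_mul trmxK.
have HT : H^T = H by rewrite trmx_mul trmxK.
have AB : C *m F *m (F^T *m invmx H *m invmx G *m C^T) = C *m invmx G *m C^T.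
  by rewrite !mulmxA -(mulmxA C F) -/H mulmxK.
have BA : F^T *m invmx H *m invmx G *m C^T *m (C *m F) = F^T *m invmx H *m F.
  by rewrite !mulmxA -(mulmxA _ C^T C) -/G mulmxKV.
split.
- by rewrite AB !mulmxA -(mulmxA _ C^T C) -/G mulmxKV.
- by rewrite BA !mulmxA -(mulmxA _ F F^T) -/H mulmxK.
- by rewrite AB !trmx_mul trmxK trmx_inv GT mulmxA.
- by rewrite BA !trmx_mul trmxK trmx_inv HT mulmxA.
Qed.

Lemma pinvP p q (A : 'M[R]_(p, q)) : is_pinv A (pinv A).
Proof.
apply: epsilon_spec; rewrite -[A in is_pinv A]mulmx_base; eexists.
apply: is_pinv_rank_factor; first exact/row_full_gram_unit/col_base_full.
rewrite -[X in X *m _]trmxK; apply: row_full_gram_unit.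
by rewrite /row_full mxrank_tr; apply: row_base_free.
Qed.

End RealMatrices.

Section UniformSequences.
Variable R : numFieldType.
Variable T : nat.
Hypothesis T_gt0 : (0 < T)%N.

Definition mean (g : 'I_T -> R) : R := T%:R^-1 * \sum_m g m.

Fixpoint expect (j : nat) (f : seq 'I_T -> R) : R :=
  if j is j'.+1 then mean (fun m => expect j' (fun s => f (m :: s))) else f [::].

Lemma mean_cst c : mean (fun _ => c) = c.
Proof.
rewrite /mean sumr_const card_ord mulrC -(mulr_natr c) mulfK //.
by rewrite pnatr_eq0 -lt0n.
Qed.

Lemma eq_mean f g : f =1 g -> mean f = mean g.
Proof. by move=> fg; rewrite /mean; under eq_bigr do rewrite fg. Qed.

Lemma meanD f g : mean (fun m => f m + g m) = mean f + mean g.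
Proof. by rewrite /mean big_split mulrDr. Qed.

Lemma meanZ c f : mean (fun m => c * f m) = c * mean f.
Proof. by rewrite /mean -mulr_sumr mulrCA. Qed.

Lemma ler_mean f g : (forall m, f m <= g m) -> mean f <= mean g.
Proof. by move=> fg; rewrite ler_wpM2l ?invr_ge0 ?ler0n // ler_sum. Qed.

Lemma eq_expect j f g : {in [pred s | size s == j], f =1 g} -> expect j f = expect j g.
Proof.
elim: j f g => [|j IH] f g fg /=; first by apply: fg.
by apply: eq_mean => m; apply: IH => s /= sj; apply: fg; rewrite inE /= eqSS.
Qed.

Lemma ler_expect j f g : {in [pred s | size s == j], forall s, f s <= g s} ->
  expect j f <= expect j g.
Proof.
elim: j f g => [|j IH] f g fg /=; first by apply: fg.
by apply: ler_mean => m; apply: IH => s /= sj; apply: fg; rewrite inE /= eqSS.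
Qed.

Lemma expectD j f g : expect j (fun s => f s + g s) = expect j f + expect j g.
Proof.
elim: j f g => [|j IH] f g //=.
by rewrite -meanD; apply: eq_mean => m; rewrite IH.
Qed.

Lemma expectZ j c f : expect j (fun s => c * f s) = c * expect j f.
Proof.
elim: j f => [|j IH] f //=.
by rewrite -meanZ; apply: eq_mean => m; rewrite IH.
Qed.

Lemma expect_cst j c : expect j (fun _ => c) = c.
Proof. by elim: j => [|j IH] //=; rewrite -[RHS](mean_cst c); apply: eq_mean. Qed.

Lemma expect_sum j N (F : 'I_N -> seq 'I_T -> R) :
  expect j (fun s => \sum_(i < N) F i s) = \sum_(i < N) expect j (F i).
Proof.
elim: j F => [|j IH] F //=; rewrite /mean -mulr_sumr exchange_big /=; congr (_ * _).
by apply: eq_bigr => m _; apply: (IH (fun i s => F i (m :: s))).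
Qed.

Lemma expect_mean j (g : 'I_T -> seq 'I_T -> R) :
  expect j (fun s => mean (g^~ s)) = mean (fun m => expect j (g m)).
Proof. by rewrite /mean expectZ expect_sum. Qed.

Lemma expect_cat p q f :
  expect (p + q) f = expect p (fun a => expect q (fun b => f (a ++ b))).
Proof. by elim: p f => [|p IH] f //=; apply: eq_mean => m; rewrite IH. Qed.

Lemma expect_rcons j f :
  expect j.+1 f = expect j (fun a => mean (fun m => f (rcons a m))).
Proof.
rewrite -addn1 expect_cat; apply: eq_expect => a _ /=.
by apply: eq_mean => m; rewrite cats1.
Qed.

Lemma sum_ffun_expect k (G : seq 'I_T -> R) :
  \sum_(f : {ffun 'I_k -> 'I_T}) G [seq f t | t <- enum 'I_k] = (T ^ k)%:R * expect k G.
Proof.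
elim: k G => [|k IH] G.
  rewrite mul1r (eq_bigr (fun _ => G [::])); last first.
    by move=> f _; rewrite (_ : enum 'I_0 = [::]) //; apply: size0nil; rewrite size_enum_ord.
  by rewrite sumr_const card_ffun !card_ord.
pose cons_ffun (p : 'I_T * {ffun 'I_k -> 'I_T}) : {ffun 'I_k.+1 -> 'I_T} :=
  [ffun i => if unlift ord0 i is Some j then p.2 j else p.1].
pose uncons_ffun (f : {ffun 'I_k.+1 -> 'I_T}) := (f ord0, [ffun i => f (lift ord0 i)]).
have cons_ffunK : cancel cons_ffun uncons_ffun.
  case=> x g; rewrite /uncons_ffun /cons_ffun /= ffunE unlift_none; congr (_, _).
  by apply/ffunP => i; rewrite !ffunE liftK.
have uncons_ffunK : cancel uncons_ffun cons_ffun.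
  move=> f; apply/ffunP => i; rewrite /cons_ffun ffunE /=.
  by case: (unliftP ord0 i) => [j ->|->]; rewrite ?ffunE.
rewrite (reindex cons_ffun) /=; last first.
  by exists uncons_ffun => ? _; [apply: cons_ffunK | apply: uncons_ffunK].
rewrite -(pair_big xpredT xpredT (fun x g => G [seq cons_ffun (x, g) t | t <- enum 'I_k.+1])).
rewrite (eq_bigr (fun x => (T ^ k)%:R * expect k (fun s => G (x :: s)))); last first.
  move=> x _; rewrite -IH; apply: eq_bigr => g _.
  rewrite enum_ordSl /= -map_comp ffunE unlift_none; congr (G (_ :: _)).
  by apply: eq_map => i /=; rewrite ffunE liftK.
rewrite -mulr_sumr /mean expnS natrM (mulrC T%:R) -mulrA mulVKf //.
by rewrite pnatr_eq0 -lt0n.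
Qed.

End UniformSequences.

Section ConsistentRegression.
Variable R : realType.
Variables d T : nat.
Variable n : 'I_T -> nat.
Variable X : forall m : 'I_T, 'M[R]_(n m, d).
Variable y : forall m : 'I_T, 'cV[R]_(n m).

Definition Prow m : 'M[R]_d := pinv (X m) *m X m.
Definition Pker m : 'M[R]_d := 1%:M - Prow m.

(* [Pker_prod [:: m1; ...; mj] = Pker mj *m ... *m Pker m1] *)
Fixpoint Pker_prod (s : seq 'I_T) : 'M[R]_d :=
  if s is m :: s' then Pker_prod s' *m Pker m else 1%:M.

Lemma Prow_orthoproj m : orthoproj (Prow m).
Proof. by case: (pinvP (X m)) => _ PXP _ PXT; split; rewrite // /Prow mulmxA PXP. Qed.

Lemma Pker_orthoproj m : orthoproj (Pker m).
Proof. exact/orthoproj_compl/Prow_orthoproj. Qed.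

Lemma mulmx_Prow m : X m *m Prow m = X m.
Proof. by rewrite /Prow mulmxA; case: (pinvP (X m)). Qed.

Lemma sqfrob_Pker m : sqfrob (Pker m) = d%:R - (\rank (X m))%:R.
Proof.
case: (Pker_orthoproj m) => PT PP; rewrite sqfrob_trace PT PP raddfB /= mxtrace1.
by rewrite mxtrace_ginv //; case: (pinvP (X m)).
Qed.

Lemma Pker_prod_cat a b : Pker_prod (a ++ b) = Pker_prod b *m Pker_prod a.
Proof. by elim: a => [|m a IH] /=; rewrite ?mulmx1 // IH mulmxA. Qed.

Lemma sqfrob_Pker_prod_mull s q (M : 'M[R]_(d, q)) : sqfrob (Pker_prod s *m M) <= sqfrob M.
Proof.
elim: s M => [|m s IH] M /=; first by rewrite mul1mx.
by rewrite -mulmxA; apply: le_trans (IH _) _; apply/sqfrob_orthoproj_mull/Pker_orthoproj.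
Qed.

Lemma foldl_step_sub w : (forall m, y m = X m *m w) ->
  forall s w0, foldl (step X y) w0 s - w = Pker_prod s *m (w0 - w).
Proof.
move=> yE; elim=> [|m s IH] w0 /=; first by rewrite mul1mx.
rewrite IH -mulmxA; congr (_ *m _).
rewrite /step yE -mulmxBr mulmxA -/(Prow m) /Pker mulmxBl mul1mx.
by rewrite -(opprB w0 w) mulmxN addrAC.
Qed.

Lemma sqnorm_residual_le s m : in_S_T X y ->
  sqnorm (X m *m iterate X y s - y m) <= sqfrob (Prow m *m Pker_prod s).
Proof.
case=> _ [X_le1 [w [w_le1 yE]]].
have -> : X m *m iterate X y s - y m = - (X m *m (Prow m *m Pker_prod s *m w)).
  rewrite yE -mulmxBr /iterate foldl_step_sub // sub0r !mulmxN -[in LHS]mulmx_Prow.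
  by rewrite !mulmxA.
rewrite sqnormN; apply: le_trans (X_le1 m _) _; apply: le_trans (sqnorm_mulmx_le _ _) _.
by rewrite ler_piMr ?sqfrob_ge0.
Qed.

Definition mean_loss j := expect j (fun s => mean (fun m => sqfrob (Prow m *m Pker_prod s))).
Definition mean_residual j := expect j (fun s => sqfrob (Pker_prod s)).

Hypothesis T_gt0 : (0 < T)%N.

Lemma mean_lossE j : mean_loss j = mean_residual j - mean_residual j.+1.
Proof.
apply/eqP; rewrite eq_sym subr_eq addrC /mean_loss /mean_residual expect_rcons -expectD.
apply/eqP/eq_expect => s _; rewrite -meanD -[LHS](mean_cst T_gt0); apply: eq_mean => m.
by rewrite -cats1 Pker_prod_cat /= mul1mx addrC (sqfrob_orthoproj_split _ (Prow_orthoproj m)).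
Qed.

Lemma mean_loss_nonincr i j : (i <= j)%N -> mean_loss j <= mean_loss i.
Proof.
apply: Order.NatMonotonyTheory.nonincnP => {i j} l; rewrite /mean_loss /= -[leRHS](mean_cst T_gt0).
apply: ler_mean => m'; apply: ler_expect => s _; apply: ler_mean => m /=.
by rewrite mulmxA; apply/sqfrob_orthoproj_mulr/Pker_orthoproj.
Qed.

Lemma sum_mean_loss N : \sum_(i < N) mean_loss i.+1 = mean_residual 1 - mean_residual N.+1.
Proof.
elim: N => [|N IH]; first by rewrite big_ord0 subrr.
by rewrite big_ord_recr /= IH mean_lossE addrA subrK.
Qed.

Lemma mean_residual_ge0 j : 0 <= mean_residual j.
Proof.
by rewrite -(expect_cst T_gt0 j 0); apply: ler_expect => s _; apply: sqfrob_ge0.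
Qed.

Lemma mean_residual1 : mean_residual 1 = d%:R - r_avg X.
Proof.
rewrite /mean_residual /= /mean /r_avg; under eq_bigr do rewrite mul1mx sqfrob_Pker.
by rewrite sumrB sumr_const card_ord mulrBr -[d%:R *+ T]mulr_natr mulrCA mulVf ?mulr1
  // pnatr_eq0 -lt0n.
Qed.

Lemma r_avg_le_dim : r_avg X <= d%:R.
Proof. by rewrite -subr_ge0 -mean_residual1 mean_residual_ge0. Qed.

Lemma sqfrob_Prow_Pker_prod_le a m b :
  sqfrob (Prow m *m Pker_prod (a ++ m :: b))
  <= 2 * sqfrob (Prow m *m Pker_prod (a ++ b)) + 2 * sqfrob (Prow m *m Pker_prod a).
Proof.
have -> : Prow m *m Pker_prod (a ++ m :: b)
    = Prow m *m Pker_prod (a ++ b) - Prow m *m Pker_prod b *m (Prow m *m Pker_prod a).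
  by rewrite !Pker_prod_cat /= /Pker mulmxBr mulmx1 mulmxBl mulmxBr !mulmxA.
apply: le_trans (sqfrobB_le _ _) _; rewrite lerD2l ler_wpM2l ?ler0n // -mulmxA.
apply: le_trans (sqfrob_orthoproj_mull _ (Prow_orthoproj m)) _.
exact: sqfrob_Pker_prod_mull.
Qed.

Let m0 : 'I_T := Ordinal T_gt0.

Definition loss_at p s := sqfrob (Prow (nth m0 s p) *m Pker_prod s).

Lemma expect_loss_at0 q : expect q.+1 (loss_at 0) <= mean_residual 1.
Proof.
rewrite /mean_residual /=; apply: ler_mean => m; rewrite -[leRHS](expect_cst T_gt0 q).
apply: ler_expect => s _; rewrite /loss_at /= mul1mx.
apply: le_trans (sqfrob_orthoproj_mull _ (Prow_orthoproj m)) _.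
exact: sqfrob_Pker_prod_mull.
Qed.

Lemma expect_loss_at p q :
  expect (p + q.+1) (loss_at p) <= 2 * mean_loss (p + q) + 2 * mean_loss p.
Proof.
rewrite expect_cat; apply: (@le_trans _ _ (expect p (fun a => mean (fun m => expect q (fun b =>
  2 * sqfrob (Prow m *m Pker_prod (a ++ b)) + 2 * sqfrob (Prow m *m Pker_prod a)))))).
  apply: ler_expect => a /eqP sa /=; apply: ler_mean => m; apply: ler_expect => b _.
  by rewrite /loss_at nth_cat sa ltnn subnn; apply: sqfrob_Prow_Pker_prod_le.
rewrite /mean_loss expect_cat -!expectZ -expectD le_eqVlt; apply/orP; left; apply/eqP.
apply: eq_expect => a _.
transitivity (mean (fun m => 2 * expect q (fun b => sqfrob (Prow m *m Pker_prod (a ++ b)))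
                             + 2 * sqfrob (Prow m *m Pker_prod a))).
  by apply: eq_mean => m; rewrite expectD !expectZ (expect_cst T_gt0).
by rewrite meanD !meanZ (expect_mean q (fun m b => sqfrob (Prow m *m Pker_prod (a ++ b)))).
Qed.

Lemma expect_sum_loss_at k : (0 < k)%N ->
  expect k (fun s => \sum_(p < k) loss_at p s) <= 5 * mean_residual 1.
Proof.
case: k => // k _; rewrite expect_sum big_ord_recl.
have loss_le (p : 'I_k) : expect k.+1 (loss_at (lift ord0 p)) <= 4 * mean_loss p.+1.
  have kE : (p.+1 + (k - p.+1).+1 = k.+1)%N by rewrite addnS subnKC.
  have := expect_loss_at p.+1 (k - p.+1); rewrite kE lift0 => /le_trans; apply.
  rewrite subnKC //; have := mean_loss_nonincr (ltn_ord p); lra.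
have sum_le : \sum_(p < k) mean_loss p.+1 <= mean_residual 1.
  by rewrite sum_mean_loss lerBlDr lerDl mean_residual_ge0.
apply: (@le_trans _ _ (mean_residual 1 + \sum_(p < k) 4 * mean_loss p.+1)).
  by apply: lerD; [apply: expect_loss_at0 | apply: ler_sum => p _; apply: loss_le].
by rewrite -mulr_sumr; lra.
Qed.

Lemma expect_forgetting_le k : in_S_T X y -> (0 < k)%N ->
  expect k (fun s => \sum_(m <- s) sqnorm (X m *m iterate X y s - y m))
  <= 5 * (d%:R - r_avg X).
Proof.
move=> S k_gt0; rewrite -mean_residual1; apply: le_trans (expect_sum_loss_at k_gt0).
apply: ler_expect => s /eqP sk; rewrite (big_nth m0) big_mkord sk.
by apply: ler_sum => p _; apply: sqnorm_residual_le.
Qed.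

End ConsistentRegression.

Theorem mainTheorem7 (R : realType) (d T : nat) (n : 'I_T -> nat)
    (X : forall m : 'I_T, 'M[R]_(n m, d)) (y : forall m : 'I_T, 'cV[R]_(n m))
    (k : nat) :
  (1 <= d)%N -> (1 <= T)%N -> in_S_T X y -> (2 <= k)%N ->
  expected_forgetting X y k <= 9%:R * (d%:R - r_avg X) / k%:R.
Proof.
move=> _ T_gt0 S k2; have k_gt0 : (0 < k)%N := ltnW k2.
pose G (s : seq 'I_T) := k%:R^-1 * \sum_(m <- s) sqnorm (X m *m iterate X y s - y m).
rewrite /expected_forgetting.
rewrite (eq_bigr (fun f : {ffun 'I_k -> 'I_T} => G [seq f t | t <- enum 'I_k])); last first.
  by move=> f _; rewrite /forgetting /G big_map big_enum.
rewrite (sum_ffun_expect T_gt0) mulKf ?pnatr_eq0 -?lt0n ?expn_gt0 ?T_gt0 //.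
rewrite expectZ mulrC ler_pM2r ?invr_gt0 ?ltr0n //.
apply: le_trans (expect_forgetting_le T_gt0 S k_gt0) _.
have := r_avg_le_dim X T_gt0; lra.
Qed.
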